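(* Let $\mathcal{H},\mathcal{K}$ be complex Hilbert spaces and $(f_*,f^* ):(\mathsf{P}(\mathcal{H}),\mathsf{L}(\mathcal{H}),\bar e_{\mathcal{H}})\to(\mathsf{P}(\mathcal{K}),\mathsf{L}(\mathcal{K}),\bar e_{\mathcal{K}})$ a Chu morphism. Then $f_*$ is injective if and only if $f^*(f_*([\psi]))=[\psi]$ for every nonzero $\psi\in\mathcal{H}$ (where the ray $f_*([\psi])$ is regarded as an element of $\mathsf{L}(\mathcal{K})$ and $[\psi]$ as an element of $\mathsf{L}(\mathcal{H})$).
   Context: A Chu morphism $(X,A,e)\to(X',A',e')$ between Chu spaces over $[0,1]$ is a pair $(f_*:X\to X',f^*:A'\to A)$ with $e(x,f^*(a'))=e'(f_*(x),a')$ for all $x,a'$. For a complex Hilbert space $\mathcal{H}$: $\mathsf{L}(\mathcal{H})$ is the set of closed subspaces, $P_S$ the orthogonal projector onto $S$, $\mathsf{P}(\mathcal{H})\subseteq\mathsf{L}(\mathcal{H})$ the set of rays $[\psi]=\{\lambda\psi:\lambda\in\mathbb{C}\}$, $\psi\neq0$, and $\bar e_{\mathcal{H}}([\psi],S)=\|P_S\psi\|^2/\|\psi\|^2$. *)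

From mathcomp Require Import all_boot all_order all_algebra.
From mathcomp Require Import complex.
From mathcomp Require Import boolp classical_sets reals.
Set Implicit Arguments. Unset Strict Implicit. Unset Printing Implicit Defensive.
Import GRing.Theory Num.Theory.
Local Open Scope ring_scope.
Local Open Scope classical_set_scope.

Record is_hilbert (R : realType) (H : lmodType R[i]) (ip : H -> H -> R[i]) : Prop := {
  ip_conj : forall x y, ip y x = Num.conj (ip x y);
  ip_linear : forall (a : R[i]) x y z, ip (a *: x + y) z = a * ip x z + ip y z;
  ip_ge0 : forall x, 0 <= ip x x;
  ip_def : forall x, ip x x = 0 -> x = 0;
  ip_complete : forall u : nat -> H,
    (forall eps : R, 0 < eps -> exists N : nat, forall m n : nat, (N <= m)%N -> (N <= n)%N ->
        Num.sqrt (complex.Re (ip (u m - u n) (u m - u n))) < eps) ->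
    exists l : H, forall eps : R, 0 < eps -> exists N : nat, forall n : nat, (N <= n)%N ->
        Num.sqrt (complex.Re (ip (u n - l) (u n - l))) < eps
}.

Section Hilbert.
Variables (R : realType) (H : lmodType R[i]) (ip : H -> H -> R[i]).

Definition hnorm2 (x : H) : R := complex.Re (ip x x).
Definition hnorm (x : H) : R := Num.sqrt (hnorm2 x).

(* closed (linear) subspace: a linear subspace closed in the norm topology
   (sequential closedness, equivalent to closedness in a metric space) *)
Definition closed_subspace (S : set H) : Prop :=
  [/\ S 0,
      (forall (a : R[i]) x y, S x -> S y -> S (a *: x + y)) &
      (forall (u : nat -> H) (l : H), (forall n, S (u n)) ->
         (forall eps : R, 0 < eps -> exists N : nat, forall n : nat, (N <= n)%N ->
             hnorm (u n - l) < eps) -> S l)].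

Definition Lsp := {S : set H | closed_subspace S}.

Definition ray (psi : H) : set H := [set a *: psi | a in [set: R[i]]].

Definition Psp := {S : Lsp | exists psi : H, psi != 0 /\ sval S = ray psi}.

Definition proj (S : set H) (x : H) : H :=
  xget 0 [set p | S p /\ forall s, S s -> ip (x - p) s = 0].

Definition rep (x : Psp) : H :=
  xget 0 [set psi | psi != 0 /\ sval (sval x) = ray psi].

Definition ebar (x : Psp) (S : Lsp) : R :=
  hnorm2 (proj (sval S) (rep x)) / hnorm2 (rep x).

End Hilbert.

Definition chu_morphism (R : realType) (H K : lmodType R[i])
  (ipH : H -> H -> R[i]) (ipK : K -> K -> R[i])
  (fs : Psp ipH -> Psp ipK) (fu : Lsp ipK -> Lsp ipH) : Prop :=
  forall (x : Psp ipH) (a' : Lsp ipK), ebar x (fu a') = ebar (fs x) a'.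

From mathcomp Require Import all_boot all_order all_algebra.
From mathcomp Require Import complex.
From mathcomp Require Import boolp classical_sets reals.

(* ebar([phi], S) = 1 exactly when phi lies in the closed subspace S, since a
   vector keeps its norm under P_S only if P_S fixes it.  For a Chu morphism,
   [phi] lies in f^*(f_*[psi]) iff ebar(f_*[phi], f_*[psi]) = 1, i.e. iff
   f_*[phi] = f_*[psi].  If f_* is injective, the closed subspace f^*(f_*[psi])
   therefore contains exactly the nonzero vectors of [psi], so it is [psi]. *)

Set Implicit Arguments. Unset Strict Implicit. Unset Printing Implicit Defensive.
Import Order.TTheory GRing.Theory Num.Theory.
Local Open Scope ring_scope.
Local Open Scope classical_set_scope.

Lemma ReD (R : realType) (a b : R[i]) :
  complex.Re (a + b) = complex.Re a + complex.Re b.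
Proof. by case: a; case: b. Qed.

Section InnerProduct.
Variables (R : realType) (H : lmodType R[i]) (ip : H -> H -> R[i]).
Hypothesis hH : is_hilbert ip.

Lemma ip0l z : ip 0 z = 0.
Proof.
have h := ip_linear hH 1 0 0 z; rewrite scale1r addr0 mul1r in h.
by apply: (@addrI _ (ip 0 z)); rewrite addr0 -h.
Qed.

Lemma ipDl x y z : ip (x + y) z = ip x z + ip y z.
Proof. by rewrite -{1}(scale1r x) (ip_linear hH) mul1r. Qed.

Lemma ipZl a x z : ip (a *: x) z = a * ip x z.
Proof. by rewrite -[a *: x]addr0 (ip_linear hH) ip0l addr0. Qed.

Lemma ipNl x z : ip (- x) z = - ip x z.
Proof. by rewrite -scaleN1r ipZl mulN1r. Qed.

Lemma ipDr x y z : ip z (x + y) = ip z x + ip z y.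
Proof. by rewrite !(ip_conj hH _ z) ipDl rmorphD. Qed.

Lemma ipZr a x z : ip z (a *: x) = Num.conj a * ip z x.
Proof. by rewrite !(ip_conj hH _ z) ipZl rmorphM. Qed.

Lemma ipNr x z : ip z (- x) = - ip z x.
Proof. by rewrite -scaleN1r ipZr rmorphN rmorph1 mulN1r. Qed.

Lemma hnorm2_ge0 x : 0 <= hnorm2 ip x.
Proof. by have := ip_ge0 hH x; rewrite lecE => /andP[]. Qed.

Lemma hnorm2_eq0 x : hnorm2 ip x = 0 -> x = 0.
Proof.
move=> x0; apply: (ip_def hH); move: (ip_ge0 hH x) x0.
by rewrite /hnorm2 lecE; case: (ip x x) => a b /= /andP[/eqP-> _] ->.
Qed.

Lemma hnorm2_neq0 x : x != 0 -> hnorm2 ip x != 0.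
Proof. by apply: contraNneq => /hnorm2_eq0->. Qed.

Lemma hnorm2_0 : hnorm2 ip 0 = 0.
Proof. by rewrite /hnorm2 ip0l. Qed.

Lemma hnorm2N x : hnorm2 ip (- x) = hnorm2 ip x.
Proof. by rewrite /hnorm2 ipNl ipNr opprK. Qed.

Lemma hnorm2D_orth u w : ip u w = 0 ->
  hnorm2 ip (u + w) = hnorm2 ip u + hnorm2 ip w.
Proof.
move=> uw; rewrite /hnorm2 ipDl !ipDr uw (ip_conj hH u w) uw rmorph0.
by rewrite addr0 add0r ReD.
Qed.

End InnerProduct.

Section Projection.
Variables (R : realType) (H : lmodType R[i]) (ip : H -> H -> R[i]).
Hypothesis hH : is_hilbert ip.

Lemma proj_id S psi : closed_subspace ip S -> S psi -> proj ip S psi = psi.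
Proof.
case=> _ Slin _ Spsi; rewrite /proj.
set P := [set p | S p /\ forall s, S s -> ip (psi - p) s = 0].
have Ppsi : P psi by split => // s _; rewrite subrr (ip0l hH).
have [Sp Op] := xgetI 0 Ppsi.
have Sd : S (psi - xget 0 P) by rewrite addrC -scaleN1r; apply: Slin.
by move/(ip_def hH)/eqP: (Op _ Sd); rewrite subr_eq0 => /eqP.
Qed.

(* When no orthogonal decomposition exists, [proj] returns the junk value 0,
   whose norm differs from that of a nonzero [psi]. *)
Lemma hnorm2_proj_eq S psi : psi != 0 ->
  hnorm2 ip (proj ip S psi) = hnorm2 ip psi -> S psi.
Proof.
move=> psi_nz; rewrite /proj.
set P := [set p | S p /\ forall s, S s -> ip (psi - p) s = 0].
have [[p0 Pp0]|noP] := pselect (exists p, P p); last first.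
  rewrite xgetPN; last by move=> p Pp; apply: noP; exists p.
  rewrite (hnorm2_0 hH) => /esym/eqP.
  by rewrite (negbTE (hnorm2_neq0 hH psi_nz)).
have [Sp Op] := xgetPex 0 (ex_intro _ p0 Pp0).
set p := xget 0 P in Sp Op *.
rewrite -[in hnorm2 ip psi](subrK p psi) (hnorm2D_orth hH (Op _ Sp)).
rewrite -{1}[hnorm2 ip p]add0r.
by move/addIr/esym/(hnorm2_eq0 hH)/eqP; rewrite subr_eq0 => /eqP ->.
Qed.

Lemma rep_spec (x : Psp ip) : rep x != 0 /\ sval (sval x) = ray (rep x).
Proof.
have [psi psi_x] := svalP x.
exact: (xgetPex 0 (ex_intro (fun q => q != 0 /\ _ = ray q) psi psi_x)).
Qed.

Lemma ebar_eq1 (x : Psp ip) (S : Lsp ip) : ebar x S = 1 <-> sval S (rep x).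
Proof.
have [rep_nz _] := rep_spec x.
split; first by move/divr1_eq; apply: hnorm2_proj_eq.
move=> Srep; rewrite /ebar proj_id //; last exact: svalP.
exact/divff/hnorm2_neq0.
Qed.

End Projection.

Section Rays.
Variables (R : realType) (H : lmodType R[i]) (ip : H -> H -> R[i]).
Hypothesis hH : is_hilbert ip.

Lemma mem_ray (v : H) : ray v v.
Proof. by exists 1 => //; rewrite scale1r. Qed.

Lemma ray_eq (v w : H) : ray v w -> w != 0 -> ray w = ray v.
Proof.
case=> a _ <- aw_nz.
have a_nz : a != 0 by apply: contraNneq aw_nz => ->; rewrite scale0r.
apply/seteqP; split => z [b _ <-].
  by exists (b * a) => //; rewrite scalerA.
by exists (b / a) => //; rewrite scalerA divfK.
Qed.

Lemma ray_sub S v : closed_subspace ip S -> S v -> ray v `<=` S.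
Proof.
by case=> S0 Slin _ Sv _ [a _ <-]; rewrite -[a *: v]addr0; exact: Slin.
Qed.

Lemma hnorm2_ray_dist (v l : H) (c a : R[i]) : ip (l - c *: v) v = 0 ->
  hnorm2 ip (l - c *: v) <= hnorm2 ip (a *: v - l).
Proof.
move=> orth; have -> : a *: v - l = - (l - c *: v) + (a - c) *: v.
  by rewrite scalerBl opprB [RHS]addrC addrA subrK.
rewrite [leRHS](hnorm2D_orth hH) ?(hnorm2N hH) ?lerDl ?(hnorm2_ge0 hH) //.
by rewrite (ipZr hH) (ipNl hH) orth oppr0 mulr0.
Qed.

Lemma ray_closed (v : H) : v != 0 -> closed_subspace ip (ray v).
Proof.
move=> v_nz; split.
- by exists 0 => //; rewrite scale0r.
- move=> a x y [b _ <-] [c _ <-]; exists (a * b + c) => //.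
  by rewrite scalerDl scalerA.
move=> u l ray_u u_l.
have vv_nz : ip v v != 0 by apply: contra_neq v_nz; apply: (ip_def hH).
pose c := ip l v / ip v v.
have orth : ip (l - c *: v) v = 0.
  by rewrite (ipDl hH) (ipNl hH) (ipZl hH) divfK ?subrr.
exists c => //; apply/eqP; rewrite eq_sym -subr_eq0; apply/eqP/(hnorm2_eq0 hH).
apply/eqP; rewrite eq_le (hnorm2_ge0 hH) andbT leNgt; apply/negP => d_gt0.
have eps_gt0 : 0 < Num.sqrt (hnorm2 ip (l - c *: v)) by rewrite sqrtr_gt0.
have [N uN_l] := u_l _ eps_gt0.
have [a _ uN] := ray_u N.
move: (uN_l N (leqnn N)); rewrite /hnorm -uN ltr_sqrt // ltNge.
by rewrite hnorm2_ray_dist.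
Qed.

Definition Psp_of (v : H) (v_nz : v != 0) : Psp ip :=
  exist _ (exist _ (ray v) (ray_closed v_nz)) (ex_intro _ v (conj v_nz erefl)).

Lemma Lsp_eq (S T : Lsp ip) : sval S = sval T -> S = T.
Proof. by case: S T => [S hS] [T hT] /=; apply: eq_exist. Qed.

Lemma Psp_inj : injective (sval : Psp ip -> Lsp ip).
Proof. by case=> [S hS] [T hT] /=; apply: eq_exist. Qed.

Lemma Psp_eq (x y : Psp ip) : sval (sval x) = sval (sval y) -> x = y.
Proof. by move/Lsp_eq/Psp_inj. Qed.

Lemma ebar_ray_eq1 (x y : Psp ip) : ebar y (sval x) = 1 <-> y = x.
Proof.
rewrite ebar_eq1 //; have [y_nz ry] := rep_spec y; have [_ rx] := rep_spec x.
rewrite rx; split => [x_y|->]; last exact: mem_ray.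
by apply: Psp_eq; rewrite ry rx; apply: ray_eq x_y y_nz.
Qed.

Lemma Lsp_eq_ray (S : Lsp ip) (x : Psp ip) :
  (forall y : Psp ip, ebar y S = 1 <-> y = x) -> S = sval x.
Proof.
move=> Sx; have [_ rx] := rep_spec x.
have S_closed : closed_subspace ip (sval S) by exact: svalP.
have rep_S y : sval S (rep y) <-> y = x by rewrite -ebar_eq1 //.
apply: Lsp_eq; apply/seteqP; split => v; last first.
  by rewrite rx; apply: ray_sub => //; apply/rep_S.
have [-> _|v_nz Sv] := eqVneq v 0.
  by rewrite rx; exists 0; rewrite ?scale0r.
have [_ rv] := rep_spec (Psp_of v_nz).
have /rep_S <- : sval S (rep (Psp_of v_nz)).
  apply: (ray_sub S_closed Sv).
  by rewrite -[ray v]/(sval (sval (Psp_of v_nz))) rv; apply: mem_ray.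
exact: (mem_ray v).
Qed.

End Rays.

Theorem proposition3p5 (R : realType)
  (H : lmodType R[i]) (ipH : H -> H -> R[i]) (hH : is_hilbert ipH)
  (K : lmodType R[i]) (ipK : K -> K -> R[i]) (hK : is_hilbert ipK)
  (fs : Psp ipH -> Psp ipK) (fu : Lsp ipK -> Lsp ipH) :
  chu_morphism fs fu ->
  (injective fs <-> forall x : Psp ipH, fu (sval (fs x)) = sval x).
Proof.
move=> chu; split=> [fs_inj x | fufs_id x y fs_xy]; last first.
  by apply: Psp_inj; rewrite -fufs_id fs_xy fufs_id.
apply: (Lsp_eq_ray hH) => y; rewrite chu (ebar_ray_eq1 hK).
by split=> [/fs_inj | ->].
Qed.
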